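(* Under the hypotheses of Lemma 2 (an RB function $H$ for $\mathcal X_r$, a constant $\eta\ge\max_{p\in\mathcal Q}H(\mathbf f[p])$, and a $1-\epsilon$ confidence region $\mathcal V$ with associated set $V$, for a given $n$-round device behavior $P_{A\mid X}$ and input distribution $\Pi$), there exists a conditional distribution $\tilde P(\cdot\mid\vec x)$ on $\mathcal A^n\cup\{\perp\}$ (with $\perp$ an additional ''abort'' symbol) such that, setting $\tilde P(\vec a,\vec x)=\tilde P(\vec a\mid\vec x)\Pi(\vec x)$ and $P(\perp\mid\vec x)=0$, $$\frac12\sum_{\vec a\in\mathcal A^n\cup\{\perp\},\vec x}\big|\tilde P(\vec a,\vec x)-P(\vec a,\vec x)\big|\le\epsilon,$$ and for every $\vec x\in\mathcal X^n$ and every $\vec a\in\mathcal A^n$ (i.e. $\vec a\neq\perp$), $$-\log_2\tilde P(\vec a\mid\vec x)\ge nH(\mathcal V(\vec a,\vec x,\epsilon))-\nu(\vec x)\eta$$ (with $-\log_20=+\infty$).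
   Context: Setting. A Bell device consists of $k$ boxes with finite input sets $\mathcal X_i$ and output sets $\mathcal A_i$; $\mathcal X=\prod_i\mathcal X_i$, $\mathcal A=\prod_i\mathcal A_i$. Single-round behaviors $p=(p(a\mid x))$; $\mathcal Q$ the set of quantum behaviors. Bell expressions $f$ with $f[p]=\sum_{a,x}f(a,x)p(a\mid x)$; $\mathbf f=(f_1,\dots,f_t)$, $\mathbf f[\mathcal Q]=\{\mathbf f[p]:p\in\mathcal Q\}$. $n$-round device behavior: $P(\vec a\mid\vec x)=\prod_{j=1}^np_{\vec a_{j-1},\vec x_{j-1}}(a_j\mid x_j)$ with each $p_{\vec a_{j-1},\vec x_{j-1}}\in\mathcal Q$ ($\vec a_j,\vec x_j$ the length-$j$ prefixes). Inputs drawn with $\Pi(\vec x)=\prod_j\pi(x_j)$; $P(\vec a,\vec x)=P(\vec a\mid\vec x)\Pi(\vec x)$. RB function for nonempty $\mathcal X_r\subseteq\mathcal X$: $H:\mathbf f[\mathcal Q]\to[0,\log_2|\mathcal A|]$ with (1) $\min_{a\in\mathcal A,x\in\mathcal X_r}(-\log_2p(a\mid x))\ge H(\mathbf f[p])$ for all $p\in\mathcal Q$, (2) $H$ convex along $\mathbf f[\mathcal Q]$: $H(q\mathbf f[p_1]+(1-q)\mathbf f[p_2])\le qH(\mathbf f[p_1])+(1-q)H(\mathbf f[p_2])$. For $\mathcal V\subseteq\mathbb R^t$, $H(\mathcal V)$ is a fixed number $\le\inf\{H(\mathbf y):\mathbf y\in\mathbf f[\mathcal Q]\cap\mathcal V\}$,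 equal to $0$ if the intersection is empty. $\nu(\vec x)=\#\{j:x_j\notin\mathcal X_r\}$. A $1-\epsilon$ confidence region is an assignment $(\vec a,\vec x)\mapsto\mathcal V(\vec a,\vec x,\epsilon)\subseteq\mathbb R^t$ with $\Pr_{P_{AX}}[\frac1n\sum_j\mathbf f[p_{\vec a_{j-1},\vec x_{j-1}}]\in\mathcal V(\vec a,\vec x,\epsilon)]\ge1-\epsilon$ for every $n$-round device behavior; $V$ is the set of $(\vec a,\vec x)$ for which this membership holds. *)

From Stdlib Require Import Reals ClassicalEpsilon.
From mathcomp Require Import all_boot.
Set Implicit Arguments. Unset Strict Implicit. Unset Printing Implicit Defensive.

Local Open Scope R_scope.

Definition rsum (T : finType) (F : T -> R) : R := \big[Rplus/0]_(i : T) F i.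
Definition rprod (n : nat) (F : 'I_n -> R) : R := \big[Rmult/1]_(j < n) F j.

(* logarithm to base 2 (only applied to positive arguments below) *)
Definition log2 (x : R) : R := ln x / ln 2.

Definition ind (P : Prop) : R :=
  if excluded_middle_informative P then 1 else 0.

Section Bell.
Variables (A X : finType) (t : nat).

Definition behavior := A -> X -> R.
Definition is_behavior (p : behavior) : Prop :=
  (forall a x, 0 <= p a x) /\ (forall x, rsum (fun a => p a x) = 1).

Definition bell_vec (f : 'I_t -> A -> X -> R) (p : behavior) : 'I_t -> R :=
  fun i => rsum (fun a => rsum (fun x => f i a x * p a x)).

(* RB function for X_r: H is defined on all of R^t but only its values on
   f[Q] matter. *)
Definition RB_function (Q : behavior -> Prop) (f : 'I_t -> A -> X -> R)
  (Xr : X -> bool) (H : ('I_t -> R) -> R) : Prop :=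
  (exists x, Xr x) /\
  (forall p, Q p -> 0 <= H (bell_vec f p) <= log2 (INR #|A|)) /\
  (* (1): min_{a, x in X_r} -log2 p(a|x) >= H(f[p]), with -log2 0 = +oo *)
  (forall p a x, Q p -> Xr x -> 0 < p a x -> H (bell_vec f p) <= - log2 (p a x)) /\
  (forall p1 p2 p3 q, Q p1 -> Q p2 -> Q p3 -> 0 <= q <= 1 ->
     bell_vec f p3 = (fun i => q * bell_vec f p1 i + (1 - q) * bell_vec f p2 i) ->
     H (bell_vec f p3) <= q * H (bell_vec f p1) + (1 - q) * H (bell_vec f p2)).

(* H(V): a number <= inf{H(y) : y in f[Q] /\ V}, equal to 0 if that set is empty *)
Definition RB_set_value (Q : behavior -> Prop) (f : 'I_t -> A -> X -> R)
  (H : ('I_t -> R) -> R) (HV : (('I_t -> R) -> Prop) -> R) : Prop :=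
  (forall S p, Q p -> S (bell_vec f p) -> HV S <= H (bell_vec f p)) /\
  (forall S, (forall p, Q p -> ~ S (bell_vec f p)) -> HV S = 0).

(* n-round device behavior, given by the history-dependent single-round
   behaviors p_{a_{j-1}, x_{j-1}} *)
Definition strategy := seq A -> seq X -> behavior.

Definition is_device (Q : behavior -> Prop) (s : strategy) : Prop :=
  forall ha hx, Q (s ha hx).

Definition devP (n : nat) (s : strategy) (a : n.-tuple A) (x : n.-tuple X) : R :=
  rprod (fun j : 'I_n => s (take j a) (take j x) (tnth a j) (tnth x j)).

Definition inPi (pi : X -> R) (n : nat) (x : n.-tuple X) : R :=
  rprod (fun j : 'I_n => pi (tnth x j)).

Definition avg_bell (f : 'I_t -> A -> X -> R) (n : nat) (s : strategy)
  (a : n.-tuple A) (x : n.-tuple X) : 'I_t -> R :=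
  fun i => / INR n * rsum (fun j : 'I_n => bell_vec f (s (take j a) (take j x)) i).

Definition conf_region (Q : behavior -> Prop) (f : 'I_t -> A -> X -> R)
  (pi : X -> R) (n : nat)
  (Vr : n.-tuple A -> n.-tuple X -> R -> (('I_t -> R) -> Prop)) (eps : R) : Prop :=
  forall s, is_device Q s ->
    rsum (fun a => rsum (fun x =>
      devP s a x * inPi pi x * ind (Vr a x eps (avg_bell f s a x)))) >= 1 - eps.

End Bell.

Definition nu (X : finType) (Xr : X -> bool) (n : nat) (x : n.-tuple X) : nat :=
  count (fun y => ~~ Xr y) x.

(* extension of P(.|x) to A^n + {bot} (None = bot), with P(bot|x) = 0 *)
Definition devP_ext (A X : finType) (n : nat) (s : strategy A X)
  (o : option (n.-tuple A)) (x : n.-tuple X) : R :=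
  match o with Some a => devP s a x | None => 0 end.

(* Cut the device's distribution down to the confidence region:
   P~(a|x) = P(a|x) [(a,x) in V], the removed mass going to the abort symbol.
   That mass, 1 - Pr[V] <= eps, is counted once on A^n and once on the abort
   symbol, so the total variation distance is at most eps.  On V, P(a|x) is
   the product of the round probabilities p_j(a_j|x_j); each factor satisfies
   -log2 p_j >= H(f[p_j]) when x_j is in X_r and -log2 p_j >= 0 >= H(f[p_j]) - eta
   otherwise.  Finally Jensen's inequality for H, realised by the uniform mixture
   of the rounds (which stays in Q and whose f-vector is the average lying in V),
   gives sum_j H(f[p_j]) >= n H(V). *)

From Pilot Require Import Defs.
From Stdlib Require Import Reals Lra FunctionalExtensionality ClassicalEpsilon.
From mathcomp Require Import all_boot Rstruct.

Set Implicit Arguments. Unset Strict Implicit. Unset Printing Implicit Defensive.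
Local Open Scope R_scope.

Section FiniteSums.
Variable T : finType.
Implicit Types F G : T -> R.

Lemma eq_rsum F G : F =1 G -> rsum F = rsum G.
Proof. by move=> FG; apply: eq_bigr => k _. Qed.

Lemma rsum_mull c F : rsum (fun k => c * F k) = c * rsum F.
Proof. by rewrite /rsum big_distrr. Qed.

Lemma rsumD F G : rsum (fun k => F k + G k) = rsum F + rsum G.
Proof. exact: big_split. Qed.

Lemma rsumB F G : rsum (fun k => F k - G k) = rsum F - rsum G.
Proof.
rewrite /Rminus rsumD; congr Rplus.
by rewrite (big_morph Ropp Ropp_plus_distr Ropp_0).
Qed.

Lemma le_rsum F G : (forall k, F k <= G k) -> rsum F <= rsum G.
Proof.
move=> FG; apply: (big_ind2 Rle) => //; first lra.
by move=> *; apply: Rplus_le_compat.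
Qed.

Lemma rsum_ge_term F k : (forall k, 0 <= F k) -> F k <= rsum F.
Proof.
move=> F0; rewrite /rsum (bigD1 k) //=.
suff : 0 <= \big[Rplus/0]_(i | i != k) F i by lra.
by apply: (big_ind (Rle 0)) => //; [lra | move=> *; apply: Rplus_le_le_0_compat].
Qed.

Lemma rsum_ord_recr n (F : 'I_n.+1 -> R) :
  rsum F = rsum (fun j => F (widen_ord (leqnSn n) j)) + F ord_max.
Proof. exact: big_ord_recr. Qed.

Lemma rsum_option (F : option T -> R) : rsum F = F None + rsum (fun a => F (Some a)).
Proof.
rewrite /rsum (bigD1 None) //=; congr Rplus.
rewrite (reindex_omap Some id) => [|[a|] //]; first by apply: eq_bigl => a; rewrite eqxx.
Qed.

End FiniteSums.

Lemma exchange_rsum (T U : finType) (F : T -> U -> R) :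
  rsum (fun a => rsum (F a)) = rsum (fun b => rsum (fun a => F a b)).
Proof. exact: exchange_big. Qed.

Lemma rprod_ge0 n (F : 'I_n -> R) : (forall j, 0 <= F j) -> 0 <= rprod F.
Proof.
by move=> F0; apply: (big_ind (Rle 0)) => //; [lra | move=> *; apply: Rmult_le_pos].
Qed.

Lemma rprod_gt0_factor n (F : 'I_n -> R) :
  (forall j, 0 <= F j) -> 0 < rprod F -> forall j, 0 < F j.
Proof.
move=> F0 Fgt0 j; case: (F0 j) => // Fj0.
by move: Fgt0; rewrite /rprod (bigD1 j) //= -Fj0 Rmult_0_l; lra.
Qed.

Lemma ln_rprod n (F : 'I_n -> R) :
  (forall j, 0 < F j) -> ln (rprod F) = rsum (fun j => ln (F j)).
Proof.
elim: n F => [|n IH] F Fgt0; first by rewrite /rprod /rsum !big_ord0 ln_1.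
rewrite /rprod /rsum !big_ord_recr /= ln_mult ?IH //.
by apply: (big_ind (Rlt 0)) => //; [lra | move=> *; apply: Rmult_lt_0_compat].
Qed.

Lemma ln2_gt0 : 0 < ln 2.
Proof. by rewrite -ln_1; apply: ln_increasing; lra. Qed.

Lemma neg_log2_rprod n (F : 'I_n -> R) :
  (forall j, 0 < F j) -> - log2 (rprod F) = rsum (fun j => - log2 (F j)).
Proof.
move=> Fgt0; rewrite /log2 ln_rprod //.
rewrite -[RHS](@eq_rsum _ (fun j => (- / ln 2) * ln (F j))); last first.
  by move=> j; rewrite /Rdiv; ring.
rewrite rsum_mull /Rdiv; ring.
Qed.

Lemma neg_log2_ge0 x : 0 < x <= 1 -> 0 <= - log2 x.
Proof.
move=> [x_gt0 x_le1].
have ln_x_le0 : ln x <= 0.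
  case: x_le1 => [x_lt1|->]; last by rewrite ln_1; lra.
  by rewrite -ln_1; apply/Rlt_le/ln_increasing.
have := Rinv_0_lt_compat _ ln2_gt0; rewrite /log2 /Rdiv; nra.
Qed.

Lemma ind_cases (P : Prop) : P /\ Defs.ind P = 1 \/ ~ P /\ Defs.ind P = 0.
Proof. by rewrite /Defs.ind; case: excluded_middle_informative; tauto. Qed.

Lemma rsum_tuple_cons (T : finType) n (G : n.+1.-tuple T -> R) :
  rsum G = rsum (fun b => rsum (fun t : n.-tuple T => G [tuple of b :: t])).
Proof.
rewrite /rsum pair_big /= (reindex (fun p : T * n.-tuple T => [tuple of p.1 :: p.2])) //.
exists (fun t : n.+1.-tuple T => (thead t, [tuple of behead t])).
  by move=> [b t] _ /=; congr pair; apply: val_inj.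
by move=> t _; rewrite [RHS]tuple_eta.
Qed.

Section DeviceBehavior.
Variables (A X : finType).
Implicit Types (s : strategy A X) (n : nat).

Lemma devP_cons s n b (a : n.-tuple A) y (x : n.-tuple X) :
  devP s [tuple of b :: a] [tuple of y :: x] =
  s [::] [::] b y * devP (fun ha hx => s (b :: ha) (y :: hx)) a x.
Proof.
rewrite /devP /rprod big_ord_recl !tnth0; congr Rmult.
by apply: eq_bigr => j _; rewrite !tnthS.
Qed.

Lemma devP_ge0 s n (a : n.-tuple A) (x : n.-tuple X) :
  (forall ha hx b y, 0 <= s ha hx b y) -> 0 <= devP s a x.
Proof. by move=> s_ge0; apply: rprod_ge0 => j; apply: s_ge0. Qed.

Lemma rsum_devP s n (x : n.-tuple X) :
  (forall ha hx y, rsum (fun b => s ha hx b y) = 1) ->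
  rsum (fun a : n.-tuple A => devP s a x) = 1.
Proof.
elim: n s x => [|n IH] s x s_sum1.
  rewrite /rsum (big_pred1 [tuple]) ?/devP ?/rprod ?big_ord0 //.
  by move=> t; apply/eqP; case: t => [[]].
rewrite rsum_tuple_cons (tuple_eta x) -[RHS](s_sum1 [::] [::] (thead x)).
apply: eq_rsum => b /=; under eq_rsum => t do rewrite devP_cons.
by rewrite rsum_mull IH ?Rmult_1_r // => ha hx y; apply: s_sum1.
Qed.

End DeviceBehavior.

(* Pi is the behavior of a device with trivial inputs whose outputs are i.i.d. with law pi. *)
Lemma rsum_inPi (X : finType) (pi : X -> R) n :
  rsum pi = 1 -> rsum (fun x : n.-tuple X => inPi pi x) = 1.
Proof.
move=> pi_sum1.
exact: (@rsum_devP X unit (fun _ _ b _ => pi b) n [tuple of nseq n tt]).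
Qed.

Section Restriction.
Variables (T : finType) (P w : T -> R).
Hypotheses (P_ge0 : forall a, 0 <= P a) (P_sum1 : rsum P = 1).
Hypotheses (w_ge0 : forall a, 0 <= w a) (w_le1 : forall a, w a <= 1).

Definition restrict_dist (o : option T) : R :=
  if o is Some a then P a * w a else 1 - rsum (fun a => P a * w a).

Lemma kept_mass_le1 : rsum (fun a => P a * w a) <= 1.
Proof.
rewrite -P_sum1; apply: le_rsum => a.
by have := P_ge0 a; have := w_le1 a; nra.
Qed.

Lemma restrict_dist_ge0 o : 0 <= restrict_dist o.
Proof.
case: o => [a|] /=; first exact: Rmult_le_pos.
by have := kept_mass_le1; lra.
Qed.

Lemma rsum_restrict_dist : rsum restrict_dist = 1.
Proof. by rewrite rsum_option /=; ring. Qed.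

Lemma l1_restrict_dist :
  rsum (fun o => Rabs (restrict_dist o - oapp P 0 o)) =
  2 * (1 - rsum (fun a => P a * w a)).
Proof.
rewrite rsum_option /= Rminus_0_r Rabs_pos_eq; last by have := kept_mass_le1; lra.
rewrite [X in _ + X](@eq_rsum _ _ (fun a => P a - P a * w a)) ?rsumB ?P_sum1; first ring.
move=> a; rewrite Rabs_minus_sym Rabs_pos_eq //; have := P_ge0 a; have := w_le1 a; nra.
Qed.

End Restriction.

Lemma l1_restrict_dist_joint (T U : finType) (P w : T -> U -> R) (pi : U -> R) :
  (forall a u, 0 <= P a u) -> (forall u, rsum (P^~ u) = 1) ->
  (forall a u, 0 <= w a u <= 1) -> (forall u, 0 <= pi u) -> rsum pi = 1 ->
  rsum (fun o => rsum (fun u =>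
    Rabs (restrict_dist (P^~ u) (w^~ u) o * pi u - oapp (P^~ u) 0 o * pi u))) =
  2 * (1 - rsum (fun a => rsum (fun u => P a u * pi u * w a u))).
Proof.
move=> P_ge0 P_sum1 w01 pi_ge0 pi_sum1.
rewrite exchange_rsum [in RHS]exchange_rsum -[1 in RHS]pi_sum1 -rsumB -rsum_mull.
apply: eq_rsum => u; transitivity
  (pi u * rsum (fun o => Rabs (restrict_dist (P^~ u) (w^~ u) o - oapp (P^~ u) 0 o))).
  rewrite -rsum_mull; apply: eq_rsum => o.
  by rewrite -Rmult_minus_distr_r Rabs_mult (Rabs_pos_eq (pi u)) // Rmult_comm.
rewrite l1_restrict_dist //; try by move=> a; case: (w01 a u).
rewrite (@eq_rsum _ (fun a => P a u * pi u * w a u) (fun a => pi u * (P a u * w a u))).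
  by rewrite rsum_mull; ring.
by move=> a; ring.
Qed.

Section RateBound.
Variables (A X : finType) (t : nat) (Q : behavior A X -> Prop).
Variables (f : 'I_t -> A -> X -> R) (Xr : X -> bool) (H : ('I_t -> R) -> R) (eta : R).
Variable HV : (('I_t -> R) -> Prop) -> R.

Definition mix (q : R) (p1 p2 : behavior A X) : behavior A X :=
  fun a x => q * p1 a x + (1 - q) * p2 a x.

Lemma bell_vec_mix q p1 p2 :
  bell_vec f (mix q p1 p2) = (fun i => q * bell_vec f p1 i + (1 - q) * bell_vec f p2 i).
Proof.
apply: functional_extensionality => i; rewrite /bell_vec -!rsum_mull -rsumD.
apply: eq_rsum => a; rewrite -!rsum_mull -rsumD.
by apply: eq_rsum => x; rewrite /mix; ring.
Qed.

Hypothesis Q_mix : forall p1 p2 q, Q p1 -> Q p2 -> 0 <= q <= 1 -> Q (mix q p1 p2).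
Hypothesis H_convex : forall p1 p2 p3 q, Q p1 -> Q p2 -> Q p3 -> 0 <= q <= 1 ->
  bell_vec f p3 = (fun i => q * bell_vec f p1 i + (1 - q) * bell_vec f p2 i) ->
  H (bell_vec f p3) <= q * H (bell_vec f p1) + (1 - q) * H (bell_vec f p2).

Lemma H_mix_le p1 p2 q : Q p1 -> Q p2 -> 0 <= q <= 1 ->
  H (bell_vec f (mix q p1 p2)) <= q * H (bell_vec f p1) + (1 - q) * H (bell_vec f p2).
Proof. by move=> Qp1 Qp2 q01; apply: H_convex; rewrite ?bell_vec_mix; auto. Qed.

(* Jensen's inequality for H, realized by the uniform mixture of the rounds. *)
Lemma uniform_mixture n (p : 'I_n.+1 -> behavior A X) : (forall j, Q (p j)) ->
  exists2 pb, Q pb & bell_vec f pb = (fun i => / INR n.+1 * rsum (fun j => bell_vec f (p j) i))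
    /\ INR n.+1 * H (bell_vec f pb) <= rsum (fun j => H (bell_vec f (p j))).
Proof.
elim: n p => [|n IH] p Qp.
  exists (p ord0) => //; split; last by rewrite /rsum big_ord1 /=; lra.
  by apply: functional_extensionality => i; rewrite /rsum big_ord1 /=; field.
have [pb Qpb [bell_pb H_pb]] := IH (fun j => p (widen_ord (leqnSn _) j)) (fun j => Qp _).
have n1_gt0 : 0 < INR n.+1 by apply/lt_0_INR/ltP.
have n2_E : INR n.+2 = INR n.+1 + 1 by rewrite S_INR.
set q := INR n.+1 / INR n.+2.
have q01 : 0 <= q <= 1.
  rewrite /q n2_E; split; first by apply: Rle_mult_inv_pos; lra.
  apply: (Rmult_le_reg_r (INR n.+1 + 1)); first lra.
  by rewrite /Rdiv Rmult_assoc Rinv_l; lra.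
exists (mix q pb (p ord_max)); first exact: Q_mix.
split.
  rewrite bell_vec_mix bell_pb; apply: functional_extensionality => i.
  by rewrite /q n2_E [in RHS]rsum_ord_recr; field; lra.
apply: Rle_trans (Rmult_le_compat_l _ _ _ (pos_INR _) (H_mix_le Qpb (Qp _) q01)) _.
rewrite rsum_ord_recr.
suff -> : INR n.+2 * (q * H (bell_vec f pb) + (1 - q) * H (bell_vec f (p ord_max))) =
          INR n.+1 * H (bell_vec f pb) + H (bell_vec f (p ord_max)) by lra.
by rewrite /q n2_E; field; lra.
Qed.

Hypothesis Q_beh : forall p, Q p -> is_behavior p.
Hypothesis H_le_neg_log2 : forall p a x, Q p -> Xr x -> 0 < p a x ->
  H (bell_vec f p) <= - log2 (p a x).
Hypothesis H_le_eta : forall p, Q p -> H (bell_vec f p) <= eta.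

Lemma round_rate_bound p a x : Q p -> 0 < p a x ->
  H (bell_vec f p) - (if Xr x then 0 else eta) <= - log2 (p a x).
Proof.
move=> Qp pax_gt0; case: ifP => [Xr_x | _].
  by have := H_le_neg_log2 Qp Xr_x pax_gt0; lra.
have : 0 <= - log2 (p a x).
  apply: neg_log2_ge0; split => //.
  have [p_ge0 p_sum1] := Q_beh Qp; rewrite -(p_sum1 x).
  by apply: rsum_ge_term => b; apply: p_ge0.
by have := H_le_eta Qp; lra.
Qed.

Lemma nu_mul_rsum n (x : n.-tuple X) :
  INR (nu Xr x) * eta = rsum (fun j : 'I_n => if Xr (tnth x j) then 0 else eta).
Proof.
rewrite /nu -sumn_count sumnE big_map big_tuple /rsum.
rewrite (big_morph INR plus_INR (erefl (INR 0))) big_distrl.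
by apply: eq_bigr => j _; case: (Xr (tnth x j)) => /=; ring.
Qed.

Lemma neg_log2_devP_ge (s : strategy A X) n (a : n.-tuple A) (x : n.-tuple X) :
  is_device Q s -> 0 < devP s a x ->
  rsum (fun j : 'I_n => H (bell_vec f (s (take j a) (take j x)))) - INR (nu Xr x) * eta
    <= - log2 (devP s a x).
Proof.
move=> Qs devP_gt0.
have s_ge0 ha hx b y : 0 <= s ha hx b y by case: (Q_beh (Qs ha hx)).
have rounds_gt0 := rprod_gt0_factor (fun j => s_ge0 _ _ _ _) devP_gt0.
rewrite /devP neg_log2_rprod // nu_mul_rsum -rsumB.
by apply: le_rsum => j; apply: round_rate_bound.
Qed.

Hypothesis HV_le_H : forall S p, Q p -> S (bell_vec f p) -> HV S <= H (bell_vec f p).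

Lemma HV_le_average_rate (s : strategy A X) n (a : n.-tuple A) (x : n.-tuple X) S :
  is_device Q s -> S (avg_bell f s a x) ->
  INR n * HV S <= rsum (fun j : 'I_n => H (bell_vec f (s (take j a) (take j x)))).
Proof.
case: n a x => [|n] a x Qs S_avg; first by rewrite /rsum big_ord0 /=; lra.
have [pb Qpb [bell_pb H_pb]] :=
  uniform_mixture (fun j : 'I_n.+1 => Qs (take j a) (take j x)).
apply: Rle_trans H_pb; apply: Rmult_le_compat_l; first exact: pos_INR.
by apply: HV_le_H Qpb _; rewrite bell_pb.
Qed.

End RateBound.

Theorem lemma3 (A X : finType) (t n : nat) (Q : behavior A X -> Prop)
  (f : 'I_t -> A -> X -> R) (Xr : X -> bool)
  (H : ('I_t -> R) -> R) (HV : (('I_t -> R) -> Prop) -> R) (eta : R)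
  (pi : X -> R) (s : strategy A X)
  (Vr : n.-tuple A -> n.-tuple X -> R -> (('I_t -> R) -> Prop)) (eps : R)
  (* standing facts about the quantum set Q: behaviors, convex *)
  (Q_beh : forall p, Q p -> is_behavior p)
  (Q_conv : forall p1 p2 q, Q p1 -> Q p2 -> 0 <= q <= 1 ->
              Q (fun a x => q * p1 a x + (1 - q) * p2 a x))
  (* hypotheses of Lemma 2 *)
  (HRB : RB_function Q f Xr H)
  (HHV : RB_set_value Q f H HV)
  (Heta : forall p, Q p -> H (bell_vec f p) <= eta)
  (Hpi : (forall x, 0 <= pi x) /\ rsum pi = 1)
  (Hs : is_device Q s)
  (HV_conf : conf_region Q f pi Vr eps) :
  exists Pt : option (n.-tuple A) -> n.-tuple X -> R,
    (forall x, (forall o, 0 <= Pt o x) /\ rsum (fun o => Pt o x) = 1) /\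
    / 2 * rsum (fun o => rsum (fun x =>
        Rabs (Pt o x * inPi pi x - devP_ext s o x * inPi pi x))) <= eps /\
    (forall (x : n.-tuple X) (a : n.-tuple A), 0 < Pt (Some a) x ->
        INR n * HV (Vr a x eps) - INR (nu Xr x) * eta <= - log2 (Pt (Some a) x)).
Proof.
have [pi_ge0 pi_sum1] := Hpi.
have [_ [_ [H_le_neg_log2 H_convex]]] := HRB.
have s_beh ha hx : is_behavior (s ha hx) by apply/Q_beh/Hs.
have P_ge0 (a : n.-tuple A) (x : n.-tuple X) : 0 <= devP s a x.
  by apply: devP_ge0 => ha hx b y; case: (s_beh ha hx).
have P_sum1 (x : n.-tuple X) : rsum (fun a => devP s a x) = 1.
  by apply: rsum_devP => ha hx y; case: (s_beh ha hx).
have inPi_ge0 (x : n.-tuple X) : 0 <= inPi pi x by apply: rprod_ge0.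
have inPi_sum1 : rsum (fun x : n.-tuple X => inPi pi x) = 1 by apply: rsum_inPi.
set w := fun a x => Defs.ind (Vr a x eps (avg_bell f s a x)).
have w01 a x : 0 <= w a x <= 1.
  by rewrite /w; case: (ind_cases (Vr a x eps (avg_bell f s a x))) => -[_ ->]; lra.
exists (fun o x => restrict_dist (devP s ^~ x) (w ^~ x) o); split; [|split].
- move=> x /=; split => [o|];
    [apply: restrict_dist_ge0 | apply: rsum_restrict_dist] => // a; by case: (w01 a x).
- by rewrite l1_restrict_dist_joint //; have := HV_conf s Hs; rewrite /w; lra.
- move=> x a /=; rewrite /w.
  case: (ind_cases (Vr a x eps (avg_bell f s a x))) => -[V_avg ->]; last by lra.
  rewrite Rmult_1_r => devP_gt0.
  have := neg_log2_devP_ge Q_beh H_le_neg_log2 Heta Hs devP_gt0.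
  have := HV_le_average_rate Q_conv H_convex (proj1 HHV) Hs V_avg.
  lra.
Qed.
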